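(* Let $n=2$, let $\mathcal{D}$ be the set of strictly positive piecewise-constant functions $[0,1]\to\mathbb{R}_{>0}$, and let $\mathcal{M}$ be a mechanism on $\mathcal{D}\times\mathcal{D}$ that is truthful and proportional. Let $F^1=(f_1^1,f_2^1)$ with $f_1^1\equiv f_2^1\equiv 1$ on $[0,1]$, and put $X_1=\mathcal{M}_1(F^1)$, $X_2=\mathcal{M}_2(F^1)$. Assume $X_1,X_2$ are such that the functions below are piecewise-constant (e.g. $X_1,X_2$ finite unions of intervals). Fix $\varepsilon\in(0,1)$ and let $F^2=(f_1^2,f_2^2)$ where $f_1^2\equiv 1$ on $[0,1]$ and $f_2^2(x)=\varepsilon$ for $x\in X_1$, $f_2^2(x)=1$ for $x\in X_2$ (and, say, $f_2^2=1$ on the null set $[0,1]\setminus(X_1\cup X_2)$). Then $|X_1|=|X_2|=\frac12$, and $\mathcal{M}_1(F^2)=X_1$ and $\mathcal{M}_2(F^2)=X_2$ up to sets of Lebesgue measure zero.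
   Context: Agent $i$'s utility for a measurable $X\subseteq[0,1]$ is $v_i(X)=\int_X f_i$; $|X|$ is Lebesgue measure. An allocation is a pair of disjoint measurable subsets of $[0,1]$ (not necessarily covering $[0,1]$); $\mathcal{M}_i(F)$ is agent $i$'s piece. Proportional: $v_i(\mathcal{M}_i(F))\ge\frac12 v_i([0,1])$ for each $i$ w.r.t. the reported densities. Truthful: for each agent $i$, any profile and any alternative report $f_i'$ in the domain, agent $i$'s utility (w.r.t. the true $f_i$) from the truthful report is at least that from reporting $f_i'$, the other report held fixed. *)

From mathcomp Require Import all_boot all_algebra all_classical all_reals all_analysis.
Import GRing.Theory Num.Theory.

Set Implicit Arguments.
Unset Strict Implicit.
Unset Printing Implicit Defensive.

Local Open Scope classical_set_scope.
Local Open Scope ring_scope.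

(* The real line equipped with the Lebesgue (i.e. completed) sigma-algebra;
   its carrier is R itself. *)
Definition LR (R : realType) : measurableType _ :=
  caratheodory_type (R:=R) ((wlength (R:=R) idfun)^*%mu).

Definition leb (R : realType) : set (LR R) -> \bar R :=
  @completed_lebesgue_measure R.

Definition piecewise_constant (R : realType) (f : R -> R) : Prop :=
  exists (n : nat) (a : nat -> R),
    [/\ a 0%N = 0, a n = 1,
        (forall i, (i < n)%N -> a i < a i.+1) &
        (forall i, (i < n)%N -> exists c : R,
            forall x : R, a i < x < a i.+1 -> f x = c)].

Definition in_dom (R : realType) (f : R -> R) : Prop :=
  piecewise_constant f /\ (forall x : R, 0 <= x <= 1 -> 0 < f x).

Definition mechanism (R : realType) := (R -> R) -> (R -> R) -> set (LR R) * set (LR R).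

Definition unit_itv (R : realType) : set (LR R) := `[(0:R), (1:R)]%classic.

Definition util (R : realType) (f : R -> R) (X : set (LR R)) : \bar R :=
  (\int[@leb R]_(x in X) (f x)%:E)%E.

Definition allocation (R : realType) (X : set (LR R) * set (LR R)) : Prop :=
  [/\ measurable X.1, measurable X.2,
      X.1 `<=` @unit_itv R, X.2 `<=` @unit_itv R & X.1 `&` X.2 = set0].

Definition valid_mechanism (R : realType) (M : mechanism R) : Prop :=
  forall f1 f2, in_dom f1 -> in_dom f2 -> allocation (M f1 f2).

Definition proportional (R : realType) (M : mechanism R) : Prop :=
  forall f1 f2 : R -> R, in_dom f1 -> in_dom f2 ->
    ((2^-1)%:E * util f1 (@unit_itv R) <= util f1 (M f1 f2).1)%E /\
    ((2^-1)%:E * util f2 (@unit_itv R) <= util f2 (M f1 f2).2)%E.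

Definition truthful (R : realType) (M : mechanism R) : Prop :=
  (forall f1 f2 f1' : R -> R, in_dom f1 -> in_dom f2 -> in_dom f1' ->
     (util f1 (M f1' f2).1 <= util f1 (M f1 f2).1)%E) /\
  (forall f1 f2 f2' : R -> R, in_dom f1 -> in_dom f2 -> in_dom f2' ->
     (util f2 (M f1 f2').2 <= util f2 (M f1 f2).2)%E).

(* Symmetric difference; "A = B up to a null set" means leb (symdiff A B) = 0. *)
Definition symdiff (T : Type) (A B : set T) : set T := (A `\` B) `|` (B `\` A).

From mathcomp Require Import all_boot all_algebra all_classical all_reals all_analysis.
From mathcomp Require Import lra.
Import order.Order.TTheory GRing.Theory Num.Theory.
Set Implicit Arguments.
Unset Strict Implicit.
Unset Printing Implicit Defensive.

Local Open Scope classical_set_scope.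
Local Open Scope ring_scope.

(* Write X1, X2 for the pieces at the all-ones profile and
   Y1, Y2 for the pieces at the profile (1, f22).
   1. Proportionality gives |X1|, |X2| >= 1/2; as they are disjoint in [0,1],
      both equal 1/2 and N = [0,1] \ (X1 u X2) is null.
   2. Agent 2 with true density 1 does not gain by reporting f22: |Y2| <= 1/2.
      Agent 2 with true density f22 does not gain by reporting 1:
      1/2 = v(X2) <= eps |Y2 n X1| + |Y2 \ X1|.  Since eps < 1 this forces
      |Y2 n X1| = 0 and |Y2| = 1/2, so Y2 \ X2 c (Y2 n X1) u N is null.
   3. Proportionality for agent 1 gives |Y1| >= 1/2, hence |Y1| = 1/2, and
      Y1 \ X1 c N u (X2 \ Y2) is null.
   4. Two sets of equal finite measure whose difference one way is null are
      equal up to a null set. *)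

Section NormalizedMeasure.
Variables (R : realType) (d : measure_display) (T : measurableType d).
Variables (mu : {measure set T -> \bar R}) (U : set T).
Hypotheses (mU : measurable U) (muU : mu U = 1%E).
Implicit Types A B C : set T.

(* The real mass of a set; it is faithful on measurable subsets of U. *)
Definition mass A : R := fine (mu A).

Lemma massE A : measurable A -> A `<=` U -> mu A = (mass A)%:E.
Proof.
move=> mA sA; rewrite /mass fineK // ge0_fin_numE ?measure_ge0 //.
apply: (le_lt_trans (y := mu U)); last by rewrite muU ltry.
by apply: le_measure => //; rewrite inE.
Qed.

Lemma mass_ge0 A : 0 <= mass A.
Proof. exact/fine_ge0/measure_ge0. Qed.

Lemma massU : mass U = 1.
Proof. by rewrite /mass muU. Qed.

Lemma mass0 : mass set0 = 0.
Proof. by rewrite /mass measure0. Qed.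

Lemma mass_le A B : measurable A -> measurable B -> B `<=` U -> A `<=` B ->
  mass A <= mass B.
Proof.
move=> mA mB sB AB; rewrite -lee_fin -!massE //; last exact: subset_trans sB.
by apply: le_measure => //; rewrite inE.
Qed.

Lemma mass_disjointU A B : measurable A -> measurable B -> A `<=` U -> B `<=` U ->
  A `&` B = set0 -> mass (A `|` B) = mass A + mass B.
Proof.
move=> mA mB sA sB AB; apply: EFin_inj; rewrite EFinD -!massE //.
- exact: measureU.
- exact: measurableU.
- by move=> x [/sA|/sB].
Qed.

Lemma mass_subadd A B : measurable A -> measurable B -> A `<=` U -> B `<=` U ->
  mass (A `|` B) <= mass A + mass B.
Proof.
move=> mA mB sA sB; rewrite -lee_fin EFinD -!massE //.
- exact: measureU2.
- exact: measurableU.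
- by move=> x [/sA|/sB].
Qed.

Lemma massDI A B : measurable A -> measurable B -> A `<=` U ->
  mass A = mass (A `\` B) + mass (A `&` B).
Proof.
move=> mA mB sA; apply: EFin_inj; rewrite EFinD -!massE //.
- exact: measureDI.
- exact: measurableI.
- by move=> x [/sA].
- exact: measurableD.
- by move=> x [/sA].
Qed.

Lemma null_cover A B C : measurable A -> measurable B -> measurable C ->
  B `<=` U -> C `<=` U -> A `<=` B `|` C -> mass B = 0 -> mass C = 0 ->
  mass A = 0.
Proof.
move=> mA mB mC sB sC sA B0 C0.
have sBC : B `|` C `<=` U by move=> x [/sB|/sC].
have := mass_le mA (measurableU _ _ mB mC) sBC sA.
have := mass_subadd mB mC sB sC; have := mass_ge0 A; lra.
Qed.

Lemma mass_disjoint_le1 A B : measurable A -> measurable B ->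
  A `<=` U -> B `<=` U -> A `&` B = set0 -> mass A + mass B <= 1.
Proof.
move=> mA mB sA sB AB; rewrite -mass_disjointU // -massU.
by apply: mass_le => //; [exact: measurableU | move=> x [/sA|/sB]].
Qed.

Lemma halves A B : measurable A -> measurable B -> A `<=` U -> B `<=` U ->
  A `&` B = set0 -> 2^-1 <= mass A -> 2^-1 <= mass B ->
  [/\ mass A = 2^-1, mass B = 2^-1 & mass (U `\` (A `|` B)) = 0].
Proof.
move=> mA mB sA sB AB hA hB.
have le1 := mass_disjoint_le1 mA mB sA sB AB.
have split_U := massDI mU (measurableU _ _ mA mB) (@subset_refl _ U).
rewrite massU setIidr in split_U; last by move=> x [/sA|/sB].
rewrite mass_disjointU // in split_U; split; lra.
Qed.

Lemma null_diff_sym A B : measurable A -> measurable B -> A `<=` U -> B `<=` U ->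
  mass A = mass B -> mass (A `\` B) = 0 -> mass (B `\` A) = 0.
Proof.
move=> mA mB sA sB AB AB0.
have := massDI mA mB sA; have := massDI mB mA sB.
by rewrite setIC; lra.
Qed.

Lemma null_symdiff A B : measurable A -> measurable B -> A `<=` U -> B `<=` U ->
  mass (A `\` B) = 0 -> mass (B `\` A) = 0 -> mu (symdiff A B) = 0%E.
Proof.
move=> mA mB sA sB AB0 BA0.
have sAB : A `\` B `<=` U by move=> x [/sA].
have sBA : B `\` A `<=` U by move=> x [/sB].
rewrite massE; [congr EFin | by apply: measurableU; exact: measurableD
               | by move=> x [/sAB|/sBA]].
have := mass_subadd (measurableD mA mB) (measurableD mB mA) sAB sBA.
have := mass_ge0 (symdiff A B); rewrite /symdiff; lra.
Qed.

Section Reallocation.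
Variables X1 X2 : set T.
Hypotheses (mX1 : measurable X1) (mX2 : measurable X2).
Hypothesis sX2 : X2 `<=` U.
Hypothesis null_rest : mass (U `\` (X1 `|` X2)) = 0.

Let mN : measurable (U `\` (X1 `|` X2)).
Proof. by apply: measurableD => //; exact: measurableU. Qed.

Let sN : U `\` (X1 `|` X2) `<=` U.
Proof. by move=> x []. Qed.

Lemma discounted_piece (eps : R) Y : 0 < eps < 1 -> measurable Y -> Y `<=` U ->
  mass Y <= 2^-1 -> 2^-1 <= eps * mass (Y `&` X1) + mass (Y `\` X1) ->
  mass Y = 2^-1 /\ mass (Y `\` X2) = 0.
Proof.
move=> /andP[eps0 eps1] mY sY hY hv.
have split_Y := massDI mY mX1 sY.
have YX1_ge0 := mass_ge0 (Y `&` X1); have YX1_ge0' := mass_ge0 (Y `\` X1).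
have YX1_0 : mass (Y `&` X1) = 0.
  have : (1 - eps) * mass (Y `&` X1) <= 0 by lra.
  by rewrite pmulr_rle0 ?subr_gt0 //; lra.
split; first by rewrite YX1_0 mulr0 in hv; lra.
apply: (null_cover _ (measurableI _ _ mY mX1) mN _ sN) => //.
- exact: measurableD.
- by move=> x [/sY].
- move=> x [Yx nX2x]; have [X1x|nX1x] := pselect (X1 x); first by left.
  by right; split; [exact: sY | case].
Qed.

Lemma complementary_piece Y1 Y2 : measurable Y1 -> measurable Y2 ->
  Y1 `<=` U -> Y2 `<=` U -> Y1 `&` Y2 = set0 ->
  2^-1 <= mass Y1 -> mass Y2 = 2^-1 -> mass (X2 `\` Y2) = 0 ->
  mass Y1 = 2^-1 /\ mass (Y1 `\` X1) = 0.
Proof.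
move=> mY1 mY2 sY1 sY2 dY hY1 hY2 X2Y2.
split; first by have := mass_disjoint_le1 mY1 mY2 sY1 sY2 dY; lra.
apply: (null_cover _ mN (measurableD mX2 mY2) sN) => //.
- exact: measurableD.
- by move=> x [/sX2].
- move=> x [Y1x nX1x]; have [X2x|nX2x] := pselect (X2 x); last first.
    by left; split; [exact: sY1 | case].
  right; split => // Y2x.
  by have : (Y1 `&` Y2) x by []; rewrite dY.
Qed.

End Reallocation.
End NormalizedMeasure.

Section LebesgueUtilities.
Variable R : realType.
Notation U := (@unit_itv R).
Notation mu := (@leb R).
Notation one := (fun _ : R => (1 : R)).
Implicit Types A X : set (LR R).

Lemma measurable_unit : measurable U.
Proof. by apply: sub_caratheodory; exact: measurable_itv. Qed.

Lemma leb_unit : mu U = 1%E.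
Proof.
have -> : mu U = @lebesgue_measure R `[(0:R), (1:R)] by [].
by rewrite lebesgue_measure_itv /= lte_fin ltr01 oppr0 adde0.
Qed.

Lemma in_dom_one : in_dom one.
Proof.
split; last by move=> x _; exact: ltr01.
exists 1%N, (fun i : nat => i%:R); split => //.
- by move=> i; rewrite ltnS leqn0 => /eqP ->; rewrite ltr01.
- by move=> i _; exists 1.
Qed.

Lemma util_one A : measurable A -> A `<=` U -> util one A = (mass mu A)%:E.
Proof.
move=> mA sA; rewrite /util (integral_cst mu mA 1) mul1e.
exact: massE measurable_unit leb_unit _ mA sA.
Qed.

Lemma util_discounted X (eps : R) A : measurable A -> measurable X -> A `<=` U ->
  util (fun x => if x \in X then eps else 1) A =
  (eps * mass mu (A `&` X) + mass mu (A `\` X))%:E.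
Proof.
move=> mA mX sA; rewrite /util.
have mAX : measurable (A `&` X) by exact: measurableI.
have mAnX : measurable (A `\` X) by exact: measurableD.
have mf : measurable_fun [set: LR R] (fun x => if x \in X then eps else 1).
  apply: measurable_fun_ifT; [|exact: measurable_cst..].
  apply: (measurable_fun_bool true).
  suff -> : [set: LR R] `&` (fun x => x \in X) @^-1` [set true] = X by [].
  by apply/seteqP; split => x /=; [case => _ /set_mem | split => //; exact: mem_set].
have disj : [disjoint A `&` X & A `\` X].
  by apply/disj_set2P; apply/seteqP; split => x // [[_ Xx] [_ nXx]].
rewrite -[in LHS](setUIDK A X) integral_setU //; last first.
  exact/(measurable_funS measurableT (@subsetT _ _))/measurable_realfun.measurable_EFinP.
rewrite EFinD EFinM -!(massE measurable_unit leb_unit) //; last 2 first.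
- by move=> x [/sA].
- by move=> x [/sA].
congr (_ + _)%E.
- rewrite (eq_integral (fun _ => eps%:E)) ?integral_cst //.
  by move=> x; rewrite inE => -[_ Xx]; rewrite mem_set.
- rewrite (eq_integral (fun _ => 1%:E)) ?integral_cst ?mul1e //.
  by move=> x; rewrite inE => -[_ nXx]; rewrite memNset.
Qed.

Lemma proportional_mass A : measurable A -> A `<=` U ->
  ((2^-1)%:E * util one U <= util one A)%E -> 2^-1 <= mass mu A.
Proof.
move=> mA sA; rewrite (util_one mA sA) (util_one measurable_unit (@subset_refl _ U)).
have -> : mass mu U = 1 := massU leb_unit.
by rewrite -EFinM mulr1 lee_fin.
Qed.

End LebesgueUtilities.

Theorem proposition2 (R : realType) (M : mechanism R) (eps : R) :
  valid_mechanism M -> truthful M -> proportional M ->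
  0 < eps < 1 ->
  let one := fun _ : R => (1 : R) in
  let X1 := (M one one).1 in
  let X2 := (M one one).2 in
  let f22 := fun x : R => if x \in X1 then eps else 1 in
  in_dom f22 ->
  [/\ @leb R X1 = (2^-1)%:E, @leb R X2 = (2^-1)%:E,
      @leb R (symdiff (M one f22).1 X1) = 0%E &
      @leb R (symdiff (M one f22).2 X2) = 0%E].
Proof.
move=> vM [_ truth2] prop heps one X1 X2 f22 df22.
have d1 : in_dom one := @in_dom_one R.
have mU := @measurable_unit R; have muU := @leb_unit R.
have [mX1 mX2 sX1 sX2 dX] := vM _ _ d1 d1.
have [mY1 mY2 sY1 sY2 dY] := vM _ _ d1 df22.
have [P1 P2] := prop _ _ d1 d1; have [P3 _] := prop _ _ d1 df22.
move: P1 P2 P3 => /proportional_mass-/(_ mX1 sX1) shareX1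
  /proportional_mass-/(_ mX2 sX2) shareX2 /proportional_mass-/(_ mY1 sY1) shareY1.
have [hX1 hX2 null_rest] := halves mU muU mX1 mX2 sX1 sX2 dX shareX1 shareX2.
have := truth2 _ _ f22 d1 d1 df22; rewrite !util_one // lee_fin hX2 => truth_one.
have := truth2 _ _ one d1 df22 d1.
have dX' : X2 `&` X1 = set0 by rewrite setIC.
rewrite !util_discounted // dX' setDidl // mass0 mulr0 add0r lee_fin hX2.
move=> truth_f22.
have [hY2 Y2X2] :=
  discounted_piece mU muU mX1 mX2 null_rest heps mY2 sY2 truth_one truth_f22.
have X2Y2 := null_diff_sym mU muU mY2 mX2 sY2 sX2 (etrans hY2 (esym hX2)) Y2X2.
have [hY1 Y1X1] := complementary_piece mU muU mX1 mX2 sX2 null_rest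
  mY1 mY2 sY1 sY2 dY shareY1 hY2 X2Y2.
have X1Y1 := null_diff_sym mU muU mY1 mX1 sY1 sX1 (etrans hY1 (esym hX1)) Y1X1.
split; [exact: etrans (massE mU muU mX1 sX1) (congr1 EFin hX1)
       | exact: etrans (massE mU muU mX2 sX2) (congr1 EFin hX2)
       | exact: null_symdiff ..].
Qed.
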